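(* Let $\theta\in\mathbb{R}$, let $\mathcal{A}_\theta$ be the smooth noncommutative torus, let $\tau\in\mathbb{C}$ with $\Im\tau>0$, and let $p\in\mathcal{A}_\theta$ be a projection ($p=p^2=p^*$) satisfying at least one of the equations $$\bar{\partial}_{(\tau)}(p)\,p=0,\qquad p\,\partial_{(\tau)}(p)=0,\qquad \partial_{(\tau)}(p)\,p=0,\qquad p\,\bar{\partial}_{(\tau)}(p)=0 .$$ Then $p$ satisfies the field equation $$p\,\Delta(p)-\Delta(p)\,p=0,$$ where $\Delta=g^{\mu\nu}\partial_\mu\partial_\nu$.
   Context: $\mathcal{A}_\theta$ is the unital $*$-algebra of series $a=\sum_{(m,n)\in\mathbb{Z}^2}a_{mn}U_1^mU_2^n$ with $(a_{mn})$ a complex Schwartz (rapidly decreasing) sequence on $\mathbb{Z}^2$, where $U_1,U_2$ are unitaries with $U_2U_1=e^{2\pi i\theta}U_1U_2$. The derivations $\partial_1,\partial_2$ of $\mathcal{A}_\theta$ are defined by $\partial_\mu(U_\nu)=2\pi i\,\delta_\mu^\nu U_\nu$ ($\mu,\nu=1,2$), extended by the Leibniz rule and linearity. The inverse metric associated with $\tau$ is $(g^{\mu\nu})=\frac{1}{(\Im\tau)^2}\begin{pmatrix}|\tau|^2&-\Re\tau\\-\Re\tau&1\end{pmatrix}$, repeated indices summed over $1,2$. The derivations $\partial_{(\tau)}=\frac{1}{\tau-\bar\tau}(-\bar\tau\partial_1+\partial_2)$ and $\bar\partial_{(\tau)}=\frac{1}{\tau-\bar\tau}(\tau\partial_1-\partial_2)$.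 *)

From Stdlib Require Import Reals ZArith.
From Coquelicot Require Import Coquelicot.
Open Scope R_scope.

(** Elements of the smooth noncommutative torus A_theta are represented by
    their coefficient families  a : Z -> Z -> C,  a m n being the coefficient
    of U1^m U2^n.  Such a family is an element of A_theta iff it is a
    Schwartz (rapidly decreasing) sequence on Z^2. *)
Definition coef := Z -> Z -> C.

Definition schwartz (a : coef) : Prop :=
  forall k : nat, exists M : R, forall m n : Z,
    (1 + IZR (Z.abs m) + IZR (Z.abs n)) ^ k * Cmod (a m n) <= M.

Definition ephase (theta x : R) : C :=
  (cos (2 * PI * theta * x), sin (2 * PI * theta * x)).

Definition sq_sum (f : Z -> Z -> C) (N : nat) : C :=
  sum_n (fun i => sum_n (fun j =>
     f (Z.of_nat i - Z.of_nat N)%Z (Z.of_nat j - Z.of_nat N)%Z) (2 * N)) (2 * N).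

Definition Clim (u : nat -> C) : C :=
  (real (Lim_seq (fun N => fst (u N))), real (Lim_seq (fun N => snd (u N)))).

(** Sum over Z^2 (absolutely convergent for the families we use, so it equals
    the limit of square partial sums). *)
Definition zsum2 (f : Z -> Z -> C) : C := Clim (sq_sum f).

(** Product in A_theta, from U2 U1 = e^{2 pi i theta} U1 U2:
    (a_{mn} U1^m U2^n)(b_{kl} U1^k U2^l) = a_{mn} b_{kl} e^{2 pi i theta n k} U1^{m+k} U2^{n+l}. *)
Definition nct_mul (theta : R) (a b : coef) : coef :=
  fun r s => zsum2 (fun m n =>
     (a m n * b (r - m)%Z (s - n)%Z * ephase theta (IZR (n * (r - m))))%C).

(** Involution: (U1^m U2^n)^* = U2^{-n} U1^{-m} = e^{2 pi i theta m n} U1^{-m} U2^{-n}. *)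
Definition nct_star (theta : R) (a : coef) : coef :=
  fun m n => (Cconj (a (- m)%Z (- n)%Z) * ephase theta (IZR (m * n)))%C.

Definition nct_add (a b : coef) : coef := fun m n => (a m n + b m n)%C.
Definition nct_scal (z : C) (a : coef) : coef := fun m n => (z * a m n)%C.

(** Basic derivations: d_mu (U_nu) = 2 pi i delta U_nu. *)
Definition d1 (a : coef) : coef := fun m n => (((0, 2 * PI * IZR m)%R : C) * a m n)%C.
Definition d2 (a : coef) : coef := fun m n => (((0, 2 * PI * IZR n)%R : C) * a m n)%C.

Definition dtau (tau : C) (a : coef) : coef :=
  nct_scal (/ (tau - Cconj tau))%C
    (nct_add (nct_scal (- Cconj tau)%C (d1 a)) (d2 a)).
Definition dbartau (tau : C) (a : coef) : coef :=
  nct_scal (/ (tau - Cconj tau))%C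
    (nct_add (nct_scal tau (d1 a)) (nct_scal (-1)%C (d2 a))).

Definition ginv (tau : C) (mu nu : nat) : R :=
  let t1 := fst tau in let t2 := snd tau in
  match mu, nu with
  | 1%nat, 1%nat => (t1 ^ 2 + t2 ^ 2) / t2 ^ 2
  | 1%nat, 2%nat => - t1 / t2 ^ 2
  | 2%nat, 1%nat => - t1 / t2 ^ 2
  | _, _ => 1 / t2 ^ 2
  end.

Definition lap (tau : C) (a : coef) : coef :=
  nct_add (nct_add (nct_scal (RtoC (ginv tau 1 1)) (d1 (d1 a)))
                   (nct_scal (RtoC (ginv tau 1 2)) (d1 (d2 a))))
          (nct_add (nct_scal (RtoC (ginv tau 2 1)) (d2 (d1 a)))
                   (nct_scal (RtoC (ginv tau 2 2)) (d2 (d2 a)))).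

Definition nct_zero : coef := fun _ _ => RtoC 0.

From Stdlib Require Import Reals ZArith Lia Lra FunctionalExtensionality.
From Coquelicot Require Import Coquelicot.
Open Scope R_scope.

(* On coefficient families, d_(tau), dbar_(tau) and Delta act by multiplying the
   coefficient of U1^m U2^n by polynomials in (m, n): the first two are derivations
   [nct_der al be] with affine symbols, adjoint to each other under the involution, and
   Delta = 4 d_(tau) dbar_(tau).  For a self-adjoint p, taking adjoints turns each of the four
   hypotheses into a pair  d2(p) p = 0,  p d1(p) = 0  with {d1, d2} = {d_(tau), dbar_(tau)}.
   Differentiating p = p^2 then gives d2 p = p d2p and d1 p = d1p p, and expanding
   d1 (d2 p) = d2 (d1 p) with the Leibniz rule in both orders yields p d1d2p = d1d2p p.
   The analytic work is to justify the Leibniz rule and (ab)^* = b^* a^* for the product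
   defined through limits of square partial sums: Schwartz decay bounds the summands by
   K (1 + |m|)^-2 (1 + |n|)^-2, which gives convergence, linearity and invariance of the
   sum under translation of the summation indices. *)

Ltac ext2 x y :=
  apply functional_extensionality; intro x; apply functional_extensionality; intro y.

(** * Square partial sums over Z^2 *)

Fixpoint zsym_sum (h : Z -> R) (N : nat) : R :=
  match N with
  | O => h 0%Z
  | S N' => zsym_sum h N' + h (Z.of_nat (S N')) + h (- Z.of_nat (S N'))%Z
  end.

Definition zsq_sum (g : Z -> Z -> R) (N : nat) : R :=
  zsym_sum (fun m => zsym_sum (g m) N) N.

Lemma sum_n_Sn_l (u : nat -> R) n :
  sum_n u (S n) = u 0%nat + sum_n (fun j => u (S j)) n.
Proof.
  induction n as [|n IH].
  - rewrite sum_Sn, !sum_O. reflexivity.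
  - rewrite sum_Sn, IH, (sum_Sn _ n). unfold plus; simpl. ring.
Qed.

Lemma sum_n_centered (h : Z -> R) N :
  sum_n (fun j => h (Z.of_nat j - Z.of_nat N)%Z) (2 * N) = zsym_sum h N.
Proof.
  revert h; induction N as [|N IH]; intro h.
  - rewrite sum_O. reflexivity.
  - replace (2 * S N)%nat with (S (S (2 * N))) by lia.
    rewrite sum_Sn, sum_n_Sn_l.
    rewrite (sum_n_ext _ (fun j => h (Z.of_nat j - Z.of_nat N)%Z)) by (intro j; f_equal; lia).
    rewrite IH; simpl zsym_sum.
    replace (Z.of_nat 0 - Z.of_nat (S N))%Z with (- Z.of_nat (S N))%Z by lia.
    replace (Z.of_nat (S (S (2 * N))) - Z.of_nat (S N))%Z with (Z.of_nat (S N)) by lia.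
    unfold plus; simpl. ring.
Qed.

Lemma fst_sum_n (u : nat -> C) n : fst (sum_n u n) = sum_n (fun k => fst (u k)) n.
Proof.
  induction n as [|n IH]; [rewrite !sum_O; reflexivity|].
  rewrite !sum_Sn, <- IH. reflexivity.
Qed.

Lemma snd_sum_n (u : nat -> C) n : snd (sum_n u n) = sum_n (fun k => snd (u k)) n.
Proof.
  induction n as [|n IH]; [rewrite !sum_O; reflexivity|].
  rewrite !sum_Sn, <- IH. reflexivity.
Qed.

Lemma Re_sq_sum f N : Re (sq_sum f N) = zsq_sum (fun m n => Re (f m n)) N.
Proof.
  unfold Re, sq_sum, zsq_sum. rewrite fst_sum_n, <- sum_n_centered.
  apply sum_n_ext; intro i. rewrite fst_sum_n.
  exact (sum_n_centered (fun n => Re (f _ n)) N).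
Qed.

Lemma Im_sq_sum f N : Im (sq_sum f N) = zsq_sum (fun m n => Im (f m n)) N.
Proof.
  unfold Im, sq_sum, zsq_sum. rewrite snd_sum_n, <- sum_n_centered.
  apply sum_n_ext; intro i. rewrite snd_sum_n.
  exact (sum_n_centered (fun n => Im (f _ n)) N).
Qed.

Lemma zsym_sum_add g1 g2 N :
  zsym_sum (fun z => g1 z + g2 z) N = zsym_sum g1 N + zsym_sum g2 N.
Proof. induction N as [|N IH]; simpl; [reflexivity|]. rewrite IH. ring. Qed.

Lemma zsym_sum_scal a g N : zsym_sum (fun z => a * g z) N = a * zsym_sum g N.
Proof. induction N as [|N IH]; simpl; [reflexivity|]. rewrite IH. ring. Qed.

Lemma zsym_sum_le g1 g2 N : (forall z, g1 z <= g2 z) -> zsym_sum g1 N <= zsym_sum g2 N.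
Proof.
  intro H. induction N as [|N IH]; simpl; [apply H|].
  pose proof (H (Z.pos (Pos.of_succ_nat N))). pose proof (H (Z.neg (Pos.of_succ_nat N))). lra.
Qed.

Lemma zsym_sum_nonneg g N : (forall z, 0 <= g z) -> 0 <= zsym_sum g N.
Proof.
  intro H. replace 0 with (zsym_sum (fun _ => 0) N); [now apply zsym_sum_le|].
  induction N as [|N IH]; simpl; [reflexivity|]. rewrite IH. ring.
Qed.

Lemma zsym_sum_le_S g N : (forall z, 0 <= g z) -> zsym_sum g N <= zsym_sum g (S N).
Proof.
  intro H. simpl (zsym_sum g (S N)).
  pose proof (H (Z.pos (Pos.of_succ_nat N))). pose proof (H (Z.neg (Pos.of_succ_nat N))). lra.
Qed.

Lemma zsym_sum_abs g N : Rabs (zsym_sum g N) <= zsym_sum (fun z => Rabs (g z)) N.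
Proof.
  induction N as [|N IH]; simpl; [lra|].
  eapply Rle_trans; [apply Rabs_triang|].
  pose proof (Rabs_triang (zsym_sum g N) (g (Z.pos (Pos.of_succ_nat N)))). lra.
Qed.

Lemma zsym_sum_shift1 g N :
  zsym_sum (fun z => g (z + 1)%Z) N = zsym_sum g N + g (Z.of_nat N + 1)%Z - g (- Z.of_nat N)%Z.
Proof.
  induction N as [|N IH]; [simpl; ring|].
  change (zsym_sum (fun z => g (z + 1)%Z) (S N)) with
    (zsym_sum (fun z => g (z + 1)%Z) N + g (Z.of_nat (S N) + 1)%Z + g (- Z.of_nat (S N) + 1)%Z).
  simpl (zsym_sum g (S N)). rewrite IH.
  replace (- Z.of_nat (S N) + 1)%Z with (- Z.of_nat N)%Z by lia.
  replace (Z.of_nat N + 1)%Z with (Z.of_nat (S N)) by lia.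
  simpl. ring.
Qed.

Lemma zsym_sum_swap g M N :
  zsym_sum (fun m => zsym_sum (g m) N) M = zsym_sum (fun n => zsym_sum (fun m => g m n) M) N.
Proof.
  induction M as [|M IH]; [reflexivity|].
  simpl (zsym_sum _ (S M)). rewrite !zsym_sum_add, IH. reflexivity.
Qed.

Lemma zsq_sum_transpose g N : zsq_sum (fun m n => g n m) N = zsq_sum g N.
Proof. unfold zsq_sum. symmetry. apply zsym_sum_swap. Qed.

(** * Summability of dominated families *)

Definition weight (m : Z) : R := / (1 + IZR (Z.abs m)) ^ 2.

Lemma IZR_abs_nonneg m : 0 <= IZR (Z.abs m).
Proof. apply IZR_le. lia. Qed.

Lemma weight_pos m : 0 < weight m.
Proof. pose proof (IZR_abs_nonneg m). apply Rinv_0_lt_compat, pow_lt. lra. Qed.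

Lemma weight_0 : weight 0 = 1.
Proof. unfold weight. simpl. field. Qed.

Lemma weight_opp m : weight (- m) = weight m.
Proof. unfold weight. now rewrite Z.abs_opp. Qed.

Lemma weight_of_nat k : weight (Z.of_nat k) = / (1 + INR k) ^ 2.
Proof. unfold weight. now rewrite Z.abs_eq, <- INR_IZR_INZ by lia. Qed.

Lemma weight_le_inv_succ m N : (Z.of_nat N <= Z.abs m)%Z -> weight m <= / INR (S N).
Proof.
  intro Hm. apply IZR_le in Hm. rewrite <- INR_IZR_INZ in Hm.
  pose proof (pos_INR N). rewrite S_INR. unfold weight.
  apply Rinv_le_contravar; [lra|]. nra.
Qed.

(* Telescoping against 1/((k+1)(k+2)) >= 1/(k+2)^2. *)
Lemma zsym_sum_weight_telescope N : zsym_sum weight N <= 3 - 2 / (INR N + 1).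
Proof.
  induction N as [|N IH]; [unfold weight; simpl; lra|].
  change (zsym_sum weight (S N)) with
    (zsym_sum weight N + weight (Z.of_nat (S N)) + weight (- Z.of_nat (S N))%Z).
  rewrite weight_opp, weight_of_nat, S_INR.
  pose proof (pos_INR N) as HN. set (a := INR N) in *.
  assert (E : 2 / (a + 1) - 2 / (a + 1 + 1) - 2 * / (1 + (a + 1)) ^ 2
              = 2 / ((a + 1) * (a + 2) ^ 2)) by (field; lra).
  assert (0 < 2 / ((a + 1) * (a + 2) ^ 2)).
  { apply Rdiv_lt_0_compat; [lra|]. apply Rmult_lt_0_compat; [lra|]. apply pow_lt; lra. }
  lra.
Qed.

Lemma zsym_sum_weight_le N : zsym_sum weight N <= 3.
Proof.
  pose proof (zsym_sum_weight_telescope N). pose proof (pos_INR N).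
  assert (0 <= 2 / (INR N + 1)) by (apply Rlt_le, Rdiv_lt_0_compat; lra). lra.
Qed.

Lemma weight_shift m r : weight (m + r) <= (1 + IZR (Z.abs r)) ^ 2 * weight m.
Proof.
  assert (H : (Z.abs m <= Z.abs (m + r) + Z.abs r)%Z) by lia.
  apply IZR_le in H. rewrite plus_IZR in H.
  pose proof (IZR_abs_nonneg m). pose proof (IZR_abs_nonneg r). pose proof (IZR_abs_nonneg (m + r)).
  unfold weight.
  set (A := 1 + IZR (Z.abs (m + r))) in *.
  set (B := 1 + IZR (Z.abs m)) in *.
  set (c := 1 + IZR (Z.abs r)) in *.
  assert (B <= c * A) by (unfold A, B, c in *; nra).
  replace (/ A ^ 2) with (c ^ 2 * / (c * A) ^ 2) by (field; unfold A, c; lra).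
  apply Rmult_le_compat_l; [apply pow_le; unfold c; lra|].
  apply Rinv_le_contravar; [apply pow_lt; unfold B; lra|].
  apply pow_incr. unfold B in *; lra.
Qed.

Definition dominated_by (g : Z -> Z -> R) (K : R) : Prop :=
  forall m n, Rabs (g m n) <= K * weight m * weight n.

Lemma dominated_by_nonneg g K : dominated_by g K -> 0 <= K.
Proof.
  intro H. specialize (H 0%Z 0%Z). rewrite weight_0 in H.
  pose proof (Rabs_pos (g 0%Z 0%Z)). lra.
Qed.

Lemma zsym_sum_row_bound g K c N :
  dominated_by g K -> Rabs (zsym_sum (g c) N) <= 3 * K * weight c.
Proof.
  intro H. pose proof (dominated_by_nonneg g K H). pose proof (weight_pos c).
  eapply Rle_trans; [apply zsym_sum_abs|].
  eapply Rle_trans; [apply (zsym_sum_le _ (fun n => K * weight c * weight n)), H|].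
  rewrite zsym_sum_scal. pose proof (zsym_sum_weight_le N).
  assert (0 <= K * weight c) by (apply Rmult_le_pos; lra). nra.
Qed.

Lemma zsq_sum_bound g K N : dominated_by g K -> Rabs (zsq_sum g N) <= 9 * K.
Proof.
  intro H. pose proof (dominated_by_nonneg g K H).
  eapply Rle_trans; [apply zsym_sum_abs|].
  eapply Rle_trans.
  { apply (zsym_sum_le _ (fun m => 3 * K * weight m)). intro m. now apply zsym_sum_row_bound. }
  rewrite zsym_sum_scal. pose proof (zsym_sum_weight_le N). nra.
Qed.

Lemma zsq_sum_le_S g N : (forall m n, 0 <= g m n) -> zsq_sum g N <= zsq_sum g (S N).
Proof.
  intro H. unfold zsq_sum.
  apply Rle_trans with (zsym_sum (fun m => zsym_sum (g m) N) (S N)).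
  - apply zsym_sum_le_S. intro. now apply zsym_sum_nonneg.
  - apply zsym_sum_le. intro. now apply zsym_sum_le_S.
Qed.

Definition is_zsumR (g : Z -> Z -> R) (l : R) : Prop := is_lim_seq (zsq_sum g) l.

Lemma is_zsumR_ext g h l : (forall m n, g m n = h m n) -> is_zsumR g l -> is_zsumR h l.
Proof.
  intro E. replace h with g; [easy|].
  ext2 m n. apply E.
Qed.

Lemma is_zsumR_lin a g1 l1 b g2 l2 : is_zsumR g1 l1 -> is_zsumR g2 l2 ->
  is_zsumR (fun m n => a * g1 m n + b * g2 m n) (a * l1 + b * l2).
Proof.
  intros H1 H2.
  apply (is_lim_seq_ext (fun N => a * zsq_sum g1 N + b * zsq_sum g2 N)).
  { intro N. unfold zsq_sum.
    rewrite <- !zsym_sum_scal, <- zsym_sum_add. f_equal. apply functional_extensionality; intro m.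
    now rewrite <- !zsym_sum_scal, <- zsym_sum_add. }
  apply is_lim_seq_plus'; apply (is_lim_seq_scal_l _ _ (Finite _)); assumption.
Qed.

Lemma is_zsumR_nonneg_dominated g K :
  (forall m n, 0 <= g m n) -> dominated_by g K -> exists l, is_zsumR g l.
Proof.
  intros Hpos H. apply (ex_finite_lim_seq_incr _ (9 * K)).
  - intro N. now apply zsq_sum_le_S.
  - intro N. pose proof (zsq_sum_bound g K N H) as B. apply Rabs_le_between in B. lra.
Qed.

(* Split into positive and negative parts, each monotone and bounded. *)
Lemma is_zsumR_dominated g K : dominated_by g K -> exists l, is_zsumR g l.
Proof.
  intro H.
  set (gp := fun m n => Rmax (g m n) 0). set (gn := fun m n => Rmax (- g m n) 0).
  assert (Rmax_abs : forall x, Rabs (Rmax x 0) <= Rabs x).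
  { intro x. unfold Rmax. destruct Rle_dec; unfold Rabs; repeat destruct Rcase_abs; lra. }
  destruct (is_zsumR_nonneg_dominated gp K) as [lp Hp].
  { intros m n. apply Rmax_r. }
  { intros m n. eapply Rle_trans; [apply Rmax_abs|apply H]. }
  destruct (is_zsumR_nonneg_dominated gn K) as [ln Hn].
  { intros m n. apply Rmax_r. }
  { intros m n. eapply Rle_trans; [apply Rmax_abs|]. rewrite Rabs_Ropp. apply H. }
  exists (1 * lp + (-1) * ln).
  replace g with (fun m n => 1 * gp m n + (-1) * gn m n); [now apply is_zsumR_lin|].
  ext2 m n.
  unfold gp, gn, Rmax. repeat destruct Rle_dec; lra.
Qed.

Lemma is_lim_seq_inv_succ : is_lim_seq (fun N => / INR (S N)) 0.
Proof.
  assert (H : is_lim_seq (fun N => INR (S N)) p_infty).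
  { apply (is_lim_seq_incr_1 INR p_infty), is_lim_seq_INR. }
  pose proof (is_lim_seq_inv _ _ H) as Hinv. apply Hinv. discriminate.
Qed.

Lemma is_lim_seq_perturb u e (l C : R) : is_lim_seq u l ->
  (forall N, Rabs (e N) <= C * / INR (S N)) -> is_lim_seq (fun N => u N + e N) l.
Proof.
  intros Hu He. replace l with (l + 0) by ring. apply is_lim_seq_plus'; [exact Hu|].
  apply is_lim_seq_le_le with (fun N => - (C * / INR (S N))) (fun N => C * / INR (S N)).
  - intro N. now apply Rabs_le_between.
  - replace (Finite 0) with (Rbar_opp (Rbar_mult C 0)) by (simpl; f_equal; ring).
    apply -> is_lim_seq_opp. apply is_lim_seq_scal_l, is_lim_seq_inv_succ.
  - replace (Finite 0) with (Rbar_mult C 0) by (simpl; f_equal; ring).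
    apply is_lim_seq_scal_l, is_lim_seq_inv_succ.
Qed.

(* Shifting the first index moves one boundary row in and one out of the square. *)
Lemma is_zsumR_shift1 g K l :
  dominated_by g K -> is_zsumR g l -> is_zsumR (fun m n => g (m + 1)%Z n) l.
Proof.
  intros H Hl. unfold is_zsumR.
  apply (is_lim_seq_ext
    (fun N => zsq_sum g N + (zsym_sum (g (Z.of_nat N + 1)%Z) N - zsym_sum (g (- Z.of_nat N)%Z) N))).
  { intro N. unfold zsq_sum. rewrite (zsym_sum_shift1 (fun m => zsym_sum (g m) N)). ring. }
  apply (is_lim_seq_perturb _ _ _ (6 * K) Hl). intro N.
  pose proof (dominated_by_nonneg g K H).
  pose proof (zsym_sum_row_bound g K (Z.of_nat N + 1)%Z N H).
  pose proof (zsym_sum_row_bound g K (- Z.of_nat N)%Z N H).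
  pose proof (weight_le_inv_succ (Z.of_nat N + 1)%Z N ltac:(lia)).
  pose proof (weight_le_inv_succ (- Z.of_nat N)%Z N ltac:(lia)).
  eapply Rle_trans; [apply Rabs_triang|]. rewrite Rabs_Ropp. nra.
Qed.

Lemma is_zsumR_transpose g l : is_zsumR g l -> is_zsumR (fun m n => g n m) l.
Proof.
  apply is_lim_seq_ext. intro N. symmetry. apply zsq_sum_transpose.
Qed.

Definition is_zsum2 (f : Z -> Z -> C) (z : C) : Prop :=
  is_zsumR (fun m n => Re (f m n)) (Re z) /\ is_zsumR (fun m n => Im (f m n)) (Im z).

Definition Cdominated (f : Z -> Z -> C) : Prop :=
  exists K, forall m n, Cmod (f m n) <= K * weight m * weight n.

Lemma Im_le_Cmod c : Rabs (Im c) <= Cmod c.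
Proof. pose proof (Rmax_Cmod c). pose proof (Rmax_r (Rabs (fst c)) (Rabs (snd c))). unfold Im. lra. Qed.

Lemma zsum2_is_zsum2 f z : is_zsum2 f z -> zsum2 f = z.
Proof.
  intros [Hre Him]. unfold zsum2, Clim.
  rewrite (Lim_seq_ext (fun N => fst (sq_sum f N)) _ (Re_sq_sum f)),
    (Lim_seq_ext (fun N => snd (sq_sum f N)) _ (Im_sq_sum f)).
  rewrite (is_lim_seq_unique _ _ Hre), (is_lim_seq_unique _ _ Him).
  now destruct z.
Qed.

Lemma is_zsum2_unique f z1 z2 : is_zsum2 f z1 -> is_zsum2 f z2 -> z1 = z2.
Proof. intros H1 H2. now rewrite <- (zsum2_is_zsum2 _ _ H1), (zsum2_is_zsum2 _ _ H2). Qed.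

Lemma is_zsum2_zsum2 f : Cdominated f -> is_zsum2 f (zsum2 f).
Proof.
  intros [K H].
  destruct (is_zsumR_dominated (fun m n => Re (f m n)) K) as [l1 H1].
  { intros m n. eapply Rle_trans; [apply re_le_Cmod|apply H]. }
  destruct (is_zsumR_dominated (fun m n => Im (f m n)) K) as [l2 H2].
  { intros m n. eapply Rle_trans; [apply Im_le_Cmod|apply H]. }
  assert (Hl : is_zsum2 f (l1, l2)) by (split; assumption).
  now rewrite (zsum2_is_zsum2 _ _ Hl).
Qed.

Lemma is_zsum2_ext f g z : (forall m n, f m n = g m n) -> is_zsum2 f z -> is_zsum2 g z.
Proof.
  intro E. replace g with f; [easy|].
  ext2 m n. apply E.
Qed.

Lemma is_zsum2_lin c1 f1 z1 c2 f2 z2 : is_zsum2 f1 z1 -> is_zsum2 f2 z2 ->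
  is_zsum2 (fun m n => c1 * f1 m n + c2 * f2 m n)%C (c1 * z1 + c2 * z2)%C.
Proof.
  intros [A1 B1] [A2 B2]. split.
  - pose proof (is_zsumR_lin 1 _ _ 1 _ _ (is_zsumR_lin (Re c1) _ _ (- Im c1) _ _ A1 B1)
                                         (is_zsumR_lin (Re c2) _ _ (- Im c2) _ _ A2 B2)) as X.
    replace (Re (c1 * z1 + c2 * z2)%C) with
      (1 * (Re c1 * Re z1 + - Im c1 * Im z1) + 1 * (Re c2 * Re z2 + - Im c2 * Im z2))
      by (unfold Re, Im; simpl; ring).
    eapply is_zsumR_ext; [|exact X]. intros m n. unfold Re, Im; simpl. ring.
  - pose proof (is_zsumR_lin 1 _ _ 1 _ _ (is_zsumR_lin (Im c1) _ _ (Re c1) _ _ A1 B1)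
                                         (is_zsumR_lin (Im c2) _ _ (Re c2) _ _ A2 B2)) as X.
    replace (Im (c1 * z1 + c2 * z2)%C) with
      (1 * (Im c1 * Re z1 + Re c1 * Im z1) + 1 * (Im c2 * Re z2 + Re c2 * Im z2))
      by (unfold Re, Im; simpl; ring).
    eapply is_zsumR_ext; [|exact X]. intros m n. unfold Re, Im; simpl. ring.
Qed.

Lemma is_zsum2_scal c f z : is_zsum2 f z -> is_zsum2 (fun m n => c * f m n)%C (c * z)%C.
Proof.
  intro H. replace (c * z)%C with (c * z + 0 * z)%C by ring.
  eapply is_zsum2_ext; [|exact (is_zsum2_lin c _ _ 0 _ _ H H)]. intros m n. unfold Re, Im; simpl. ring.
Qed.

Lemma is_zsum2_plus f1 z1 f2 z2 : is_zsum2 f1 z1 -> is_zsum2 f2 z2 ->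
  is_zsum2 (fun m n => f1 m n + f2 m n)%C (z1 + z2)%C.
Proof.
  intros H1 H2. replace (z1 + z2)%C with (1 * z1 + 1 * z2)%C by ring.
  eapply is_zsum2_ext; [|exact (is_zsum2_lin 1 _ _ 1 _ _ H1 H2)]. intros m n. unfold Re, Im; simpl. ring.
Qed.

Lemma is_zsum2_conj f z : is_zsum2 f z -> is_zsum2 (fun m n => Cconj (f m n)) (Cconj z).
Proof.
  intros [A B]. split; [exact A|].
  replace (Im (Cconj z)) with ((-1) * Im z + 0 * Im z) by (unfold Re, Im; simpl; ring).
  eapply is_zsumR_ext; [|exact (is_zsumR_lin (-1) _ _ 0 _ _ B B)]. intros m n. unfold Re, Im; simpl. ring.
Qed.

Lemma Cdominated_shift_l f r : Cdominated f -> Cdominated (fun m n => f (m + r)%Z n).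
Proof.
  intros [K H]. exists (K * (1 + IZR (Z.abs r)) ^ 2). intros m n.
  assert (HK : 0 <= K).
  { pose proof (Rle_trans _ _ _ (Cmod_ge_0 _) (H 0%Z 0%Z)). rewrite weight_0 in *. lra. }
  pose proof (weight_shift m r). pose proof (weight_pos n).
  eapply Rle_trans; [apply H|].
  replace (K * (1 + IZR (Z.abs r)) ^ 2 * weight m * weight n)
    with (K * ((1 + IZR (Z.abs r)) ^ 2 * weight m) * weight n) by ring.
  apply Rmult_le_compat_r; [lra|]. apply Rmult_le_compat_l; lra.
Qed.

Lemma Cdominated_transpose f : Cdominated f -> Cdominated (fun m n => f n m).
Proof. intros [K H]. exists K. intros m n. rewrite H. lra. Qed.

Lemma is_zsum2_shift1 f z : Cdominated f -> is_zsum2 f z -> is_zsum2 (fun m n => f (m + 1)%Z n) z.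
Proof.
  intros [K H] [A B]. split.
  - apply (is_zsumR_shift1 (fun m n => Re (f m n)) K); [|exact A].
    intros m n. eapply Rle_trans; [apply re_le_Cmod|apply H].
  - apply (is_zsumR_shift1 (fun m n => Im (f m n)) K); [|exact B].
    intros m n. eapply Rle_trans; [apply Im_le_Cmod|apply H].
Qed.

Lemma is_zsum2_shift_l f z r : Cdominated f -> is_zsum2 f z -> is_zsum2 (fun m n => f (m + r)%Z n) z.
Proof.
  intros Hf Hz. induction r as [|r IH|r IH] using Z.peano_ind.
  - eapply is_zsum2_ext; [|exact Hz]. intros m n. now rewrite Z.add_0_r.
  - eapply is_zsum2_ext; [|exact (is_zsum2_shift1 _ _ (Cdominated_shift_l f r Hf) IH)].
    intros m n. cbv beta. f_equal. lia.
  - set (g := fun m n => f (m + Z.pred r)%Z n).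
    assert (Hg : Cdominated g) by apply Cdominated_shift_l, Hf.
    assert (Hshift : is_zsum2 (fun m n => f (m + r)%Z n) (zsum2 g)).
    { eapply is_zsum2_ext; [|exact (is_zsum2_shift1 _ _ Hg (is_zsum2_zsum2 _ Hg))].
      intros m n. unfold g. cbv beta. f_equal. lia. }
    rewrite <- (is_zsum2_unique _ _ _ Hshift IH). exact (is_zsum2_zsum2 _ Hg).
Qed.

Lemma is_zsum2_transpose f z : is_zsum2 f z -> is_zsum2 (fun m n => f n m) z.
Proof.
  intros [A B]. split.
  - exact (is_zsumR_transpose (fun m n => Re (f m n)) _ A).
  - exact (is_zsumR_transpose (fun m n => Im (f m n)) _ B).
Qed.

Lemma zsum2_shift f r s : Cdominated f -> zsum2 (fun m n => f (m + r)%Z (n + s)%Z) = zsum2 f.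
Proof.
  intro Hf. apply zsum2_is_zsum2.
  set (g := fun m n => f (n + r)%Z m).
  assert (Hg : Cdominated g) by exact (Cdominated_transpose _ (Cdominated_shift_l f r Hf)).
  assert (Hgz : is_zsum2 g (zsum2 f))
    by exact (is_zsum2_transpose _ _ (is_zsum2_shift_l f _ r Hf (is_zsum2_zsum2 f Hf))).
  exact (is_zsum2_transpose _ _ (is_zsum2_shift_l g _ s Hg Hgz)).
Qed.

(** * Derivations, product and involution *)

Definition symbol (al be : C) (m n : Z) : C := (al * IZR m + be * IZR n)%C.

Definition nct_der (al be : C) (a : coef) : coef := fun m n => (symbol al be m n * a m n)%C.

Lemma symbol_add al be m n r s :
  symbol al be r s = (symbol al be m n + symbol al be (r - m) (s - n))%C.
Proof. unfold symbol. rewrite !minus_IZR, !RtoC_minus. ring. Qed.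

Lemma nct_der_comm a1 b1 a2 b2 a :
  nct_der a1 b1 (nct_der a2 b2 a) = nct_der a2 b2 (nct_der a1 b1 a).
Proof.
  ext2 m n.
  unfold nct_der. ring.
Qed.

Lemma Cmod_symbol_le al be m n :
  Cmod (symbol al be m n) <= (Cmod al + Cmod be) * (1 + IZR (Z.abs m) + IZR (Z.abs n)).
Proof.
  unfold symbol. eapply Rle_trans; [apply Cmod_triangle|].
  rewrite !Cmod_mult, !Cmod_R, <- !abs_IZR.
  pose proof (Cmod_ge_0 al). pose proof (Cmod_ge_0 be).
  pose proof (IZR_abs_nonneg m). pose proof (IZR_abs_nonneg n).
  pose proof (Rmult_le_pos _ _ H H2). pose proof (Rmult_le_pos _ _ H0 H1). nra.
Qed.

Lemma schwartz_der al be a : schwartz a -> schwartz (nct_der al be a).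
Proof.
  intros H k. destruct (H (S k)) as [M HM].
  exists ((Cmod al + Cmod be) * M). intros m n. unfold nct_der. rewrite Cmod_mult.
  specialize (HM m n). simpl in HM. pose proof (Cmod_symbol_le al be m n).
  set (A := 1 + IZR (Z.abs m) + IZR (Z.abs n)) in *.
  assert (1 <= A) by (pose proof (IZR_abs_nonneg m); pose proof (IZR_abs_nonneg n); unfold A; lra).
  pose proof (Cmod_ge_0 (a m n)). pose proof (Cmod_ge_0 (symbol al be m n)).
  pose proof (Cmod_ge_0 al). pose proof (Cmod_ge_0 be).
  assert (0 <= A ^ k) by (apply pow_le; lra).
  apply Rle_trans with (A ^ k * ((Cmod al + Cmod be) * A) * Cmod (a m n)).
  - rewrite <- Rmult_assoc. apply Rmult_le_compat_r; [assumption|].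
    apply Rmult_le_compat_l; assumption.
  - replace (A ^ k * ((Cmod al + Cmod be) * A) * Cmod (a m n))
      with ((Cmod al + Cmod be) * (A * A ^ k * Cmod (a m n))) by ring.
    apply Rmult_le_compat_l; lra.
Qed.

Lemma schwartz_bounded a : schwartz a -> exists B, forall m n, Cmod (a m n) <= B.
Proof.
  intro H. destruct (H 0%nat) as [M HM]. exists M. intros m n.
  specialize (HM m n). simpl in HM. lra.
Qed.

(* Decay of order 4 in 1 + |m| + |n| dominates (1 + |m|)^2 (1 + |n|)^2. *)
Lemma schwartz_Cdominated a : schwartz a -> Cdominated a.
Proof.
  intro H. destruct (H 4%nat) as [M HM]. exists M. intros m n. specialize (HM m n).
  pose proof (IZR_abs_nonneg m). pose proof (IZR_abs_nonneg n). pose proof (Cmod_ge_0 (a m n)).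
  unfold weight.
  set (x := IZR (Z.abs m)) in *. set (y := IZR (Z.abs n)) in *. set (c := Cmod (a m n)) in *.
  assert (0 <= (1 + x) * (1 + y) <= (1 + x + y) ^ 2) by nra.
  assert (((1 + x) * (1 + y)) ^ 2 <= (1 + x + y) ^ 4).
  { replace ((1 + x + y) ^ 4) with (((1 + x + y) ^ 2) ^ 2) by ring. apply pow_incr. lra. }
  assert (c * ((1 + x) * (1 + y)) ^ 2 <= M).
  { eapply Rle_trans; [|exact HM]. rewrite Rmult_comm. apply Rmult_le_compat_r; lra. }
  replace (M * / (1 + x) ^ 2 * / (1 + y) ^ 2) with (M / ((1 + x) * (1 + y)) ^ 2) by (field; lra).
  apply Rle_div_r; [apply pow_lt; nra|]. lra.
Qed.

Lemma Cmod_ephase th x : Cmod (ephase th x) = 1.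
Proof.
  unfold Cmod, ephase. simpl. rewrite !Rmult_1_r, <- sqrt_1. f_equal.
  rewrite Rplus_comm. apply sin2_cos2.
Qed.

Lemma ephase_mul_IZR th k l : (ephase th (IZR k) * ephase th (IZR l))%C = ephase th (IZR (k + l)).
Proof.
  unfold ephase, Cmult. simpl. rewrite plus_IZR.
  replace (2 * PI * th * (IZR k + IZR l)) with (2 * PI * th * IZR k + 2 * PI * th * IZR l) by ring.
  rewrite cos_plus, sin_plus. f_equal; ring.
Qed.

Lemma ephase_conj_IZR th k : Cconj (ephase th (IZR k)) = ephase th (IZR (- k)).
Proof.
  unfold ephase, Cconj. simpl. rewrite opp_IZR.
  replace (2 * PI * th * - IZR k) with (- (2 * PI * th * IZR k)) by ring.
  now rewrite cos_neg, sin_neg.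
Qed.

Lemma schwartz_star th a : schwartz a -> schwartz (nct_star th a).
Proof.
  intros H k. destruct (H k) as [M HM]. exists M. intros m n.
  unfold nct_star. rewrite Cmod_mult, Cmod_ephase, Cmod_conj, Rmult_1_r.
  specialize (HM (- m)%Z (- n)%Z). now rewrite !Z.abs_opp in HM.
Qed.

Definition mul_summand (th : R) (a b : coef) (r s : Z) : Z -> Z -> C :=
  fun m n => (a m n * b (r - m)%Z (s - n)%Z * ephase th (IZR (n * (r - m))))%C.

Lemma mul_summand_Cdominated th a b r s :
  schwartz a -> schwartz b -> Cdominated (mul_summand th a b r s).
Proof.
  intros Ha Hb. destruct (schwartz_Cdominated a Ha) as [K HK].
  destruct (schwartz_bounded b Hb) as [B HB].
  exists (K * B). intros m n. unfold mul_summand. rewrite !Cmod_mult, Cmod_ephase, Rmult_1_r.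
  pose proof (HK m n). pose proof (HB (r - m)%Z (s - n)%Z).
  pose proof (weight_pos m). pose proof (weight_pos n).
  pose proof (Cmod_ge_0 (a m n)). pose proof (Cmod_ge_0 (b (r - m)%Z (s - n)%Z)).
  replace (K * B * weight m * weight n) with ((K * weight m * weight n) * B) by ring.
  apply Rmult_le_compat; assumption.
Qed.

Lemma is_zsum2_nct_mul th a b r s : schwartz a -> schwartz b ->
  is_zsum2 (mul_summand th a b r s) (nct_mul th a b r s).
Proof. intros Ha Hb. apply is_zsum2_zsum2, mul_summand_Cdominated; assumption. Qed.

Lemma nct_der_mul th al be a b : schwartz a -> schwartz b ->
  nct_der al be (nct_mul th a b) =
  nct_add (nct_mul th (nct_der al be a) b) (nct_mul th a (nct_der al be b)).
Proof.
  intros Ha Hb. ext2 r s.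
  unfold nct_der at 1, nct_add.
  apply (is_zsum2_unique (fun m n => symbol al be r s * mul_summand th a b r s m n)%C).
  - apply is_zsum2_scal, is_zsum2_nct_mul; assumption.
  - eapply is_zsum2_ext;
      [|apply is_zsum2_plus; apply is_zsum2_nct_mul; auto using schwartz_der].
    intros m n. unfold mul_summand, nct_der. rewrite (symbol_add al be m n r s). ring.
Qed.

Lemma nct_mul_scal_l th c a b : schwartz a -> schwartz b ->
  nct_mul th (nct_scal c a) b = nct_scal c (nct_mul th a b).
Proof.
  intros Ha Hb. ext2 r s.
  apply zsum2_is_zsum2.
  eapply is_zsum2_ext; [|apply is_zsum2_scal, is_zsum2_nct_mul; eassumption].
  intros m n. unfold mul_summand, nct_scal. ring.
Qed.

Lemma nct_mul_scal_r th c a b : schwartz a -> schwartz b ->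
  nct_mul th a (nct_scal c b) = nct_scal c (nct_mul th a b).
Proof.
  intros Ha Hb. ext2 r s.
  apply zsum2_is_zsum2.
  eapply is_zsum2_ext; [|apply is_zsum2_scal, is_zsum2_nct_mul; eassumption].
  intros m n. unfold mul_summand, nct_scal. ring.
Qed.

(* After the reindexing (m, n) -> (m + r, n + s) of the sum defining the right-hand side,
   the summands agree with those on the left, phases included. *)
Lemma nct_star_mul th a b : schwartz a -> schwartz b ->
  nct_star th (nct_mul th a b) = nct_mul th (nct_star th b) (nct_star th a).
Proof.
  intros Ha Hb. ext2 r s.
  unfold nct_star at 1.
  change (nct_mul th (nct_star th b) (nct_star th a) r s)
    with (zsum2 (mul_summand th (nct_star th b) (nct_star th a) r s)).
  rewrite <- (zsum2_shift _ r s (mul_summand_Cdominated th _ _ r s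
                                   (schwartz_star th b Hb) (schwartz_star th a Ha))).
  symmetry. apply zsum2_is_zsum2. rewrite Cmult_comm.
  eapply is_zsum2_ext;
    [|exact (is_zsum2_scal _ _ _ (is_zsum2_conj _ _ (is_zsum2_nct_mul th a b (- r) (- s) Ha Hb)))].
  intros m n. unfold mul_summand, nct_star.
  replace (- (r - (m + r)))%Z with m by ring.
  replace (- (s - (n + s)))%Z with n by ring.
  replace (- (m + r))%Z with (- r - m)%Z by ring.
  replace (- (n + s))%Z with (- s - n)%Z by ring.
  rewrite !Cmult_conj, ephase_conj_IZR.
  transitivity (Cconj (a m n) * Cconj (b (- r - m)%Z (- s - n)%Z) *
    (ephase th (IZR (r * s)) * ephase th (IZR (- (n * (- r - m))))))%C; [ring|].
  transitivity (Cconj (a m n) * Cconj (b (- r - m)%Z (- s - n)%Z) *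
    (ephase th (IZR ((m + r) * (n + s))) * ephase th (IZR ((r - (m + r)) * (s - (n + s)))) *
     ephase th (IZR ((n + s) * (r - (m + r))))))%C; [|ring].
  rewrite !ephase_mul_IZR. do 3 f_equal. ring.
Qed.

Lemma nct_star_der th al be a :
  nct_star th (nct_der al be a) = nct_der (- Cconj al) (- Cconj be) (nct_star th a).
Proof.
  ext2 m n.
  unfold nct_star, nct_der, symbol. rewrite !opp_IZR, !Cmult_conj, !Cplus_conj, !Cmult_conj.
  replace (Cconj (RtoC (- IZR m))) with (- RtoC (IZR m))%C
    by (apply injective_projections; simpl; ring).
  replace (Cconj (RtoC (- IZR n))) with (- RtoC (IZR n))%C
    by (apply injective_projections; simpl; ring).
  ring.
Qed.

Lemma nct_star_zero th : nct_star th nct_zero = nct_zero.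
Proof.
  ext2 m n.
  unfold nct_star, nct_zero. apply injective_projections; simpl; ring.
Qed.

Lemma nct_add_zero_l a : nct_add nct_zero a = a.
Proof.
  ext2 m n.
  unfold nct_add, nct_zero. ring.
Qed.

Lemma nct_add_zero_r a : nct_add a nct_zero = a.
Proof.
  ext2 m n.
  unfold nct_add, nct_zero. ring.
Qed.

Lemma nct_mul_zero_adjoint th a b : schwartz a -> schwartz b ->
  nct_mul th a b = nct_zero -> nct_mul th (nct_star th b) (nct_star th a) = nct_zero.
Proof. intros Ha Hb H. now rewrite <- nct_star_mul, H, nct_star_zero. Qed.

Section Projection.

Variables (th : R) (p : coef).
Hypotheses (Hp : schwartz p) (Hpp : p = nct_mul th p p).

Lemma der_projection_l al be :
  nct_mul th (nct_der al be p) p = nct_zero -> nct_der al be p = nct_mul th p (nct_der al be p).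
Proof.
  intro H. rewrite Hpp at 1. now rewrite nct_der_mul, H, nct_add_zero_l.
Qed.

Lemma der_projection_r al be :
  nct_mul th p (nct_der al be p) = nct_zero -> nct_der al be p = nct_mul th (nct_der al be p) p.
Proof.
  intro H. rewrite Hpp at 1. now rewrite nct_der_mul, H, nct_add_zero_r.
Qed.

(* Expand d1 (d2 p) = d1 (p d2p) and d2 (d1 p) = d2 (d1p p) by the Leibniz rule;
   the two expansions share the term d1p d2p. *)
Lemma projection_commutes_der2 a1 b1 a2 b2 :
  nct_mul th (nct_der a2 b2 p) p = nct_zero -> nct_mul th p (nct_der a1 b1 p) = nct_zero ->
  nct_mul th p (nct_der a1 b1 (nct_der a2 b2 p)) = nct_mul th (nct_der a1 b1 (nct_der a2 b2 p)) p.
Proof.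
  intros H2 H1.
  assert (S1 := schwartz_der a1 b1 p Hp). assert (S2 := schwartz_der a2 b2 p Hp).
  set (X := nct_der a1 b1 (nct_der a2 b2 p)).
  set (Y := nct_mul th (nct_der a1 b1 p) (nct_der a2 b2 p)).
  assert (E1 : X = nct_add Y (nct_mul th p X)).
  { unfold X, Y. rewrite <- nct_der_mul by assumption. f_equal. now apply der_projection_l. }
  assert (E2 : X = nct_add (nct_mul th X p) Y).
  { unfold X, Y. rewrite nct_der_comm, <- nct_der_mul by assumption.
    f_equal. now apply der_projection_r. }
  ext2 r s.
  apply (f_equal (fun f => f r s)) in E1, E2. unfold nct_add in E1, E2.
  transitivity (X r s - Y r s)%C; [rewrite E1 | rewrite E2]; ring.
Qed.

End Projection.

(* Since tau - conj tau = 2 i Im tau, d_(tau) and dbar_(tau) multiply the coefficient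
   of U1^m U2^n by these affine symbols in (m, n). *)
Definition dtau_al (tau : C) : C := (- (PI * Re tau / Im tau), PI).
Definition dtau_be (tau : C) : C := (PI / Im tau, 0).
Definition dbartau_al (tau : C) : C := (PI * Re tau / Im tau, PI).
Definition dbartau_be (tau : C) : C := (- (PI / Im tau), 0).

Lemma dtau_der tau a : 0 < Im tau -> dtau tau a = nct_der (dtau_al tau) (dtau_be tau) a.
Proof.
  destruct tau as [x y]. unfold Im; simpl. intro Hy.
  ext2 m n.
  unfold dtau, nct_scal, nct_add, d1, d2, nct_der, symbol, dtau_al, dtau_be, Cconj, Re, Im.
  apply injective_projections; simpl; field; nra.
Qed.

Lemma dbartau_der tau a : 0 < Im tau -> dbartau tau a = nct_der (dbartau_al tau) (dbartau_be tau) a.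
Proof.
  destruct tau as [x y]. unfold Im; simpl. intro Hy.
  ext2 m n.
  unfold dbartau, nct_scal, nct_add, d1, d2, nct_der, symbol, dbartau_al, dbartau_be, Cconj, Re, Im.
  apply injective_projections; simpl; field; nra.
Qed.

Lemma lap_der tau a : 0 < Im tau ->
  lap tau a = nct_scal 4 (nct_der (dtau_al tau) (dtau_be tau)
                           (nct_der (dbartau_al tau) (dbartau_be tau) a)).
Proof.
  destruct tau as [x y]. unfold Im; simpl. intro Hy.
  ext2 m n.
  unfold lap, ginv, nct_scal, nct_add, d1, d2, nct_der, symbol,
    dtau_al, dtau_be, dbartau_al, dbartau_be, Re, Im.
  apply injective_projections; simpl; field; nra.
Qed.

Lemma der_left_zero_adjoint th al be p : schwartz p -> p = nct_star th p ->
  nct_mul th (nct_der al be p) p = nct_zero ->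
  nct_mul th p (nct_der (- Cconj al) (- Cconj be) p) = nct_zero.
Proof.
  intros Hp Hself H. apply nct_mul_zero_adjoint in H; auto using schwartz_der.
  now rewrite nct_star_der, <- Hself in H.
Qed.

Lemma der_right_zero_adjoint th al be p : schwartz p -> p = nct_star th p ->
  nct_mul th p (nct_der al be p) = nct_zero ->
  nct_mul th (nct_der (- Cconj al) (- Cconj be) p) p = nct_zero.
Proof.
  intros Hp Hself H. apply nct_mul_zero_adjoint in H; auto using schwartz_der.
  now rewrite nct_star_der, <- Hself in H.
Qed.

Lemma dtau_dbartau_adjoint tau :
  (- Cconj (dtau_al tau))%C = dbartau_al tau /\ (- Cconj (dtau_be tau))%C = dbartau_be tau /\
  (- Cconj (dbartau_al tau))%C = dtau_al tau /\ (- Cconj (dbartau_be tau))%C = dtau_be tau.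
Proof.
  unfold dtau_al, dtau_be, dbartau_al, dbartau_be, Cconj.
  repeat split; apply injective_projections; simpl; ring.
Qed.

Lemma dtau_projection_cases th tau p : schwartz p -> p = nct_star th p ->
  (nct_mul th (nct_der (dbartau_al tau) (dbartau_be tau) p) p = nct_zero \/
   nct_mul th p (nct_der (dtau_al tau) (dtau_be tau) p) = nct_zero \/
   nct_mul th (nct_der (dtau_al tau) (dtau_be tau) p) p = nct_zero \/
   nct_mul th p (nct_der (dbartau_al tau) (dbartau_be tau) p) = nct_zero) ->
  (nct_mul th (nct_der (dbartau_al tau) (dbartau_be tau) p) p = nct_zero /\
   nct_mul th p (nct_der (dtau_al tau) (dtau_be tau) p) = nct_zero) \/
  (nct_mul th (nct_der (dtau_al tau) (dtau_be tau) p) p = nct_zero /\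
   nct_mul th p (nct_der (dbartau_al tau) (dbartau_be tau) p) = nct_zero).
Proof.
  intros Hp Hself Hcase. destruct (dtau_dbartau_adjoint tau) as (E1 & E2 & E3 & E4).
  destruct Hcase as [H|[H|[H|H]]]; [left|left|right|right]; split; try exact H.
  - rewrite <- E3, <- E4. now apply der_left_zero_adjoint.
  - rewrite <- E1, <- E2. now apply der_right_zero_adjoint.
  - rewrite <- E1, <- E2. now apply der_left_zero_adjoint.
  - rewrite <- E3, <- E4. now apply der_right_zero_adjoint.
Qed.

Theorem mainTheorem2 (theta : R) (tau : C) (p : coef) :
  0 < Im tau ->
  schwartz p ->
  p = nct_mul theta p p ->
  p = nct_star theta p ->
  (nct_mul theta (dbartau tau p) p = nct_zero \/
   nct_mul theta p (dtau tau p) = nct_zero \/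
   nct_mul theta (dtau tau p) p = nct_zero \/
   nct_mul theta p (dbartau tau p) = nct_zero) ->
  nct_add (nct_mul theta p (lap tau p))
          (nct_scal (-1)%C (nct_mul theta (lap tau p) p)) = nct_zero.
Proof.
  intros Hy Hp Hpp Hself Hcase.
  rewrite (dtau_der tau p Hy), (dbartau_der tau p Hy) in Hcase.
  assert (Hdd := schwartz_der (dtau_al tau) (dtau_be tau) _
                  (schwartz_der (dbartau_al tau) (dbartau_be tau) p Hp)).
  rewrite (lap_der tau p Hy), nct_mul_scal_l, nct_mul_scal_r by assumption.
  assert (Hcomm : nct_mul theta p (nct_der (dtau_al tau) (dtau_be tau)
                                     (nct_der (dbartau_al tau) (dbartau_be tau) p)) =
                  nct_mul theta (nct_der (dtau_al tau) (dtau_be tau)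
                                   (nct_der (dbartau_al tau) (dbartau_be tau) p)) p).
  { destruct (dtau_projection_cases theta tau p Hp Hself Hcase) as [[H1 H2]|[H1 H2]].
    - now apply projection_commutes_der2.
    - rewrite nct_der_comm. now apply projection_commutes_der2. }
  rewrite Hcomm.
  ext2 m n.
  unfold nct_add, nct_scal, nct_zero. ring.
Qed.
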